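(* Let $m\ge 1$ and $\alpha,\beta^1,\dots,\beta^m\in\mathrm{ord}$. Then $\alpha<\beta^1,\dots,\beta^m$ holds if and only if $\alpha<\sup(\beta^1,\dots,\beta^m)$ (the right-hand side being a one-element list). Similarly, $\alpha\le\beta^1,\dots,\beta^m$ holds if and only if $\alpha\le\sup(\beta^1,\dots,\beta^m)$.
   Context: Work constructively (intuitionistic logic). Let $\mathfrak F$ be a set of index sets such that: $\mathbb N$ and each $\mathbb N_k=\{n\in\mathbb N:n<k\}$ ($k\ge 0$) belong to $\mathfrak F$; every finitely enumerated subset of an element of $\mathfrak F$ is isomorphic to an element of $\mathfrak F$; for $J\in\mathfrak F$ the set of finitely enumerated subsets of $J$ is isomorphic to an element of $\mathfrak F$; $\mathfrak F$ is stable under disjoint unions indexed by elements of $\mathfrak F$. A finitely enumerated subset of $A$ is one given by a map $\mathbb N_k\to A$; write $F\subseteq_f I$. The set $\mathrm{ord}$ of (names of) ordinals is inductively generated by a distinguished element $\underline 0$ and, for every family $(\alpha_i)_{i\in I}$ with $I\in\mathfrak F$ and $\alpha_i\in\mathrm{ord}$, an element $\mathrm S(\alpha_i)_{i\in I}$. Elements of the second kind form $\mathrm{ord}^*$; for $\alpha=\mathrm S(\alpha_i)_{i\in I}$ put $I_\alpha=I$ and call the $\alpha_i$ its definitional subordinals; by convention $I_{\underline 0}=\mathbb N_0=\emptyset$. For a finite list $F$ in $I_\alpha$, $\alpha_F$ is the list of the $\alpha_i$, $i\in F$. Supremum: for a family $(\alpha^j)_{j\in J}$ in $\mathrm{ord}^*$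 with $J\in\mathfrak F$, $\sup(\alpha^j)_{j\in J}=\mathrm S(\varepsilon_k)_{k\in K}$ where $K$ is the disjoint union of the $I_{\alpha^j}$ (with injections $\iota_j$) and $\varepsilon_{\iota_j(i)}=(\alpha^j)_i$. For a finite family in $\mathrm{ord}$, $\sup(\alpha^1,\dots,\alpha^r)$ is $\underline 0$ if all $\alpha^k$ are $\underline 0$, and otherwise the sup of those $\alpha^k$ in $\mathrm{ord}^*$. Two relations between an element of $\mathrm{ord}$ and a nonempty finite list of elements of $\mathrm{ord}$ are defined by simultaneous induction: $\alpha\le\beta^1,\dots,\beta^m$ means $\alpha_i<\beta^1,\dots,\beta^m$ for all $i\in I_\alpha$; $\alpha<\beta^1,\dots,\beta^m$ means there exist $F_1\subseteq_f I_{\beta^1},\dots,F_m\subseteq_f I_{\beta^m}$, not all empty, with $\alpha\le\beta^1_{F_1},\dots,\beta^m_{F_m}$ (concatenated list). *)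

From mathcomp Require Import all_boot.
Set Implicit Arguments. Unset Strict Implicit. Unset Printing Implicit Defensive.

Record iso (A B : Type) : Type := Iso {
  iso_fw : A -> B;
  iso_bw : B -> A;
  iso_fwK : forall x, iso_bw (iso_fw x) = x;
  iso_bwK : forall y, iso_fw (iso_bw y) = y }.

Definition fe_subset (A : Type) (k : nat) (f : 'I_k -> A) : Type :=
  {x : A | exists i, f i = x}.

(* The class \mathfrak F of index sets: a type of codes [code] with their
   interpretation [El], together with witnesses of the closure properties. *)
Record IndexFam : Type := {
  code : Type;
  El : code -> Type;
  cN : code;
  isoN : iso (El cN) nat;
  cNk : nat -> code;
  isoNk : forall k, iso (El (cNk k)) 'I_k;
  cFin : forall (c : code) (k : nat) (f : 'I_k -> El c), code;
  isoFin : forall c k (f : 'I_k -> El c), iso (El (cFin f)) (fe_subset f);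
  cPf : code -> code;
  isoPf : forall c, iso (El (cPf c)) {k : nat & 'I_k -> El c};
  cSum : forall (c : code) (d : El c -> code), code;
  isoSum : forall c (d : El c -> code), iso (El (cSum d)) {i : El c & El (d i)} }.

Section Ord.
Variable FF : IndexFam.

(* Names of ordinals: 0 and S(alpha_i)_{i in I}, I in F. *)
Inductive ord : Type :=
| O0 : ord
| Sup : forall c : code FF, (El c -> ord) -> ord.

(* I_alpha, with the convention I_0 = N_0 *)
Arguments Sup : clear implicits.

Definition idx (a : ord) : code FF :=
  match a with O0 => cNk FF 0 | Sup c _ => c end.

(* definitional subordinals (the O0 case is vacuous since I_0 is empty) *)
Definition sub (a : ord) : El (idx a) -> ord :=
  match a return El (idx a) -> ord with
  | O0 => fun _ => O0
  | Sup _ f => f end.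

Arguments sub : clear implicits.

Definition isSup (a : ord) : bool := if a is Sup _ _ then true else false.

(* A choice of finite lists F_1 ⊆_f I_{b1}, ..., F_m ⊆_f I_{bm} *)
Fixpoint sel (L : seq ord) : Type :=
  match L with
  | [::] => unit
  | b :: L' => (seq (El (idx b)) * sel L')%type
  end.

Fixpoint sel_ne (L : seq ord) : sel L -> Prop :=
  match L return sel L -> Prop with
  | [::] => fun _ => False
  | b :: L' => fun s => (0 < size s.1)%N \/ sel_ne s.2
  end.

Fixpoint selected (L : seq ord) : sel L -> seq ord :=
  match L return sel L -> seq ord with
  | [::] => fun _ => [::]
  | b :: L' => fun s => map (sub b) s.1 ++ selected s.2
  end.

(* alpha <= L : for all i in I_alpha, alpha_i < L, where
   alpha_i < L : exists F_j not all empty with alpha_i <= L_F. *)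
Fixpoint ord_le (a : ord) (L : seq ord) : Prop :=
  match a with
  | O0 => True (* I_0 is empty *)
  | Sup c f => forall i : El c,
      exists s : sel L, sel_ne s /\ ord_le (f i) (selected s)
  end.

Definition ord_lt (a : ord) (L : seq ord) : Prop :=
  exists s : sel L, sel_ne s /\ ord_le a (selected s).

(* sup of a finite family: 0 if all are 0, otherwise the sup (disjoint-union
   construction) of the nonzero members, indexed by N_r. *)
Definition ord_sup (L : seq ord) : ord :=
  let nz := filter isSup L in
  let r := size nz in
  let pick := fun x : El (cNk FF r) => nth O0 nz (iso_fw (isoNk FF r) x) in
  let d := fun x => idx (pick x) in
  match nz with
  | [::] => O0
  | _ :: _ => Sup (cSum d)
      (fun y => let p := iso_fw (@isoSum FF (cNk FF r) d) y in sub (pick (projT1 p)) (projT2 p))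
  end.

End Ord.

From mathcomp Require Import all_boot.
From Stdlib Require List.

(* Whether a <= L or a < L holds depends on L only through the set of
   definitional subordinals of the members of L: when every subordinal of L is
   one of L', a nonempty selection from L can be traded for one from L'
   containing the same ordinals, and induction on a makes [ord_le] and [ord_lt]
   monotone in that set.  The supremum is built so that its definitional
   subordinals are exactly those of the members of L. *)

(* [ord FF] has no decidable equality, so list membership is [List.In]. *)
Section ListMembership.
Set Implicit Arguments. Unset Strict Implicit.
Variable T : Type.
Implicit Types (x : T) (s : seq T).

Lemma In_cat x s1 s2 : List.In x (s1 ++ s2) <-> List.In x s1 \/ List.In x s2.
Proof. exact: List.in_app_iff. Qed.

Lemma In_map (U : Type) (f : T -> U) y s :
  List.In y (map f s) <-> exists2 x, f x = y & List.In x s.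
Proof. by rewrite List.in_map_iff; split=> [[x []]|[x]]; exists x. Qed.

Lemma In_nth x0 s k : k < size s -> List.In (nth x0 s k) s.
Proof. by elim: s k => [|x s IHs] [|k] //= ks; [left | right; apply: IHs]. Qed.

Lemma In_nthP x0 x s : List.In x s -> exists2 k, k < size s & nth x0 s k = x.
Proof.
elim: s => [|y s IHs] //= [<-|/IHs[k ks <-]]; first by exists 0.
by exists k.+1.
Qed.

End ListMembership.

Section Subordinals.
Set Implicit Arguments. Unset Strict Implicit.
Variable FF : IndexFam.
Implicit Types (a b o : ord FF) (L : seq (ord FF)).

Definition subordinal L o : Prop := exists2 b, List.In b L & exists j : El (idx b), sub j = o.

Lemma subordinal_incl (l l' : seq (ord FF)) o :
  List.incl l l' -> subordinal l o -> subordinal l' o.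
Proof. by move=> ll' [b /ll' l'b jo]; exists b. Qed.

Lemma subordinal_filter_isSup L o :
  subordinal L o <-> subordinal (filter (@isSup FF) L) o.
Proof.
split=> [[[|c f] Lb [j <-]]|[b /List.filter_In[Lb _] jo]]; last by exists b.
- by case: (iso_fw (isoNk FF 0) j).
- by exists (Sup f); [apply/List.filter_In | exists j].
Qed.

Definition sum_ord (c : code FF) (p : El c -> ord FF) : ord FF :=
  @Sup _ (cSum (fun x => idx (p x)))
    (fun y => let q := iso_fw (isoSum (fun x => idx (p x))) y in
              sub (projT2 q)).

Lemma subordinal_sum_ord c (p : El c -> ord FF) o :
  subordinal [:: sum_ord p] o <-> exists x, exists j : El (idx (p x)), sub j = o.
Proof.
split=> [[_ [<-|[]] [y <-]]|[x [j <-]]].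
  by exists (projT1 (iso_fw (isoSum _) y)), (projT2 (iso_fw (isoSum _) y)).
exists (sum_ord p); first by left.
by exists (iso_bw (isoSum _) (existT _ x j)); rewrite /= iso_bwK.
Qed.

Lemma ord_sup_cons L h t : filter (@isSup FF) L = h :: t ->
  ord_sup L = sum_ord (fun x => nth (O0 FF) (h :: t) (iso_fw (isoNk FF (size t).+1) x)).
Proof. by rewrite /ord_sup => ->. Qed.

Lemma subordinal_ord_sup L o : subordinal [:: ord_sup L] o <-> subordinal L o.
Proof.
rewrite [subordinal L o]subordinal_filter_isSup.
case E: (filter _ L) => [|h t].
  rewrite /ord_sup E.
  split=> [[_ [<-|[]] [j _]]|[_ []]].
  by case: (iso_fw (isoNk FF 0) j).
rewrite (ord_sup_cons E) subordinal_sum_ord.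
split=> [[x [j <-]]|[b hb [j <-]]].
  exists (nth (O0 FF) (h :: t) (iso_fw (isoNk FF _) x)); last by exists j.
  exact: In_nth.
have [k kt ekb] := In_nthP (O0 FF) hb.
exists (iso_bw (isoNk FF (size t).+1) (Ordinal kt)).
by rewrite iso_bwK ekb; exists j.
Qed.

Fixpoint sel_nil L : sel L :=
  match L return sel L with [::] => tt | _ :: L' => ([::], sel_nil L') end.

Lemma sel_neP L (s : sel L) : sel_ne s <-> selected s <> [::].
Proof.
elim: L s => [|b L IHL] /=; first by case; split=> // /(_ erefl).
case=> [[|x l] s] /=; last by split=> // _; left.
by rewrite -IHL; split=> [[]|] //; right.
Qed.

Lemma subordinal_selected L (s : sel L) o :
  List.In o (selected s) -> subordinal L o.
Proof.
elim: L s => [|b L IHL] //= [l s] /In_cat[/In_map[j <- _]|/IHL].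
  by exists b; [left | exists j].
by case=> b' Lb' jo; exists b'; [right|].
Qed.

Lemma sel_cons L (s : sel L) b (j : El (idx b)) :
  List.In b L -> exists s' : sel L, List.incl (sub j :: selected s) (selected s').
Proof.
elim: L s => [|b' L IHL] //= [l s] [eb|Lb].
  by subst b'; exists (j :: l, s); apply: List.incl_refl.
have [s' ss'] := IHL s Lb; exists (l, s') => x /= [<-|/In_cat[lx|sx]]; apply/In_cat.
- by right; apply: ss'; left.
- by left.
- by right; apply: ss'; right.
Qed.

Lemma sel_of_subordinals L (l : seq (ord FF)) :
  (forall o, List.In o l -> subordinal L o) ->
  exists s : sel L, List.incl l (selected s).
Proof.
elim: l => [|o l IHl] subl; first by exists (sel_nil L).
have [s ls] := IHl (fun o' lo' => subl o' (or_intror lo')).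
have [b Lb [j jo]] := subl o (or_introl erefl).
have [s' ss'] := sel_cons s j Lb.
by exists s'; rewrite -jo => x /= [<-|/ls sx]; apply: ss'; [left | right].
Qed.

Lemma sel_transfer L L' : (forall o, subordinal L o -> subordinal L' o) ->
  forall s : sel L, sel_ne s ->
  exists2 s' : sel L', sel_ne s' & List.incl (selected s) (selected s').
Proof.
move=> LL' s /sel_neP ne.
have [s' ss'] : exists s' : sel L', List.incl (selected s) (selected s').
  by apply: sel_of_subordinals => o /subordinal_selected/LL'.
exists s' => //; apply/sel_neP; move: ne ss'.
by case: (selected s) => [|o l] // _ /(_ o (or_introl erefl)); case: (selected s').
Qed.

Lemma ord_le_mono a L L' : (forall o, subordinal L o -> subordinal L' o) ->
  ord_le a L -> ord_le a L'.
Proof.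
elim: a L L' => [|c f IHf] //= L L' LL' aL i.
have [s [ne fs]] := aL i; have [s' ne' ss'] := sel_transfer LL' ne.
by exists s'; split=> //; apply: IHf fs => o; apply: subordinal_incl.
Qed.

Lemma ord_lt_mono a L L' : (forall o, subordinal L o -> subordinal L' o) ->
  ord_lt a L -> ord_lt a L'.
Proof.
move=> LL' [s [ne aLs]]; have [s' ne' ss'] := sel_transfer LL' ne.
by exists s'; split=> //; apply: ord_le_mono aLs => o; apply: subordinal_incl.
Qed.

End Subordinals.

Theorem lemma3p7 (FF : IndexFam) (a : ord FF) (L : seq (ord FF)) :
  (0 < size L)%N ->
  (ord_lt a L <-> ord_lt a [:: ord_sup L]) /\
  (ord_le a L <-> ord_le a [:: ord_sup L]).
Proof.
move=> _.
have L_sup o : subordinal L o -> subordinal [:: ord_sup L] o by move/subordinal_ord_sup.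
have sup_L o : subordinal [:: ord_sup L] o -> subordinal L o by move/subordinal_ord_sup.
by split; split; [apply: ord_lt_mono L_sup | apply: ord_lt_mono sup_L
                 | apply: ord_le_mono L_sup | apply: ord_le_mono sup_L].
Qed.
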